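(* Let $d\in\mathbb{N}$, let $P$ be a stationary and ergodic probability measure on $\Omega=[0,1]^{\mathcal{K}^d}$, and fix an integer $0\le q<d$. For each $t\in[0,1]$ let $\widehat\beta_q(t)$ be the non-random constant such that $|\Lambda_n|^{-1}\beta_q^n(t)\to\widehat\beta_q(t)$ almost surely. Assume that for every $Q\in\mathcal{K}^d$ the function $t\mapsto P(\omega_Q\le t)$ is continuous on $[0,1]$. Let $L_q^n=\int_0^1\beta_q^n(t)\,dt$. Then $$\lim_{n\to\infty}\frac{1}{|\Lambda_n|}L_q^n=\int_0^1\widehat\beta_q(t)\,dt\quad\text{almost surely.}$$
   Context: An elementary interval is $[l,l+1]$ or $[l]=[l,l]$ with $l\in\mathbb{Z}$; an elementary cube in $\mathbb{R}^d$ is a product of $d$ elementary intervals, of dimension equal to the number of nondegenerate factors; $\mathcal{K}^d$ is the set of all elementary cubes. A cubical set is a union of elementary cubes. For a cubical set $X$, $C_k(X)$ is the free $\mathbb{Z}$-module on the $k$-dimensional elementary cubes contained in $X$ with the standard cubical boundary operator; $H_k(X)$ is the resulting homology and, for bounded $X$, $\beta_k(X)$ is the rank of the free part of $H_k(X)$. $\Omega=[0,1]^{\mathcal{K}^d}$ with product topology and Borel $\sigma$-field; $\tau_x\omega=(\omega_{-x+Q})_Q$ for $x\in\mathbb{Z}^d$; stationarity: $P\circ\tau_x^{-1}=P$ for all $x$; ergodicity: translation-invariant events have probability $0$ or $1$. $X(t)=\bigcup\{Q:\omega_Q\le t\}$, $\Lambda_n=[-n,n]^d$, $X^n(t)=X(t)\cap\Lambda_n$,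 $\beta_q^n(t)=\beta_q(X^n(t))$, $|\Lambda_n|=(2n)^d$. *)

From HB Require Import structures.
From mathcomp Require Import all_boot all_order all_algebra.
From mathcomp Require Import all_classical all_reals all_analysis.
Set Implicit Arguments. Unset Strict Implicit. Unset Printing Implicit Defensive.
Import Order.TTheory GRing.Theory Num.Theory numFieldNormedType.Exports.
Local Open Scope classical_set_scope.
Local Open Scope ring_scope.

(* An elementary cube is a product of d elementary intervals; the i-th factor
   (l, b) stands for [l, l+1] if b = true and for [l] = [l, l] if b = false. *)
Definition cube (d : nat) := {ffun 'I_d -> int * bool}.

Definition cube_set (R : realType) (d : nat) (Q : cube d) : set ('I_d -> R) :=
  [set x | forall i : 'I_d,
     ((Q i).1)%:~R <= x i <= ((Q i).1 + ((Q i).2 : nat)%:Z)%:~R].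

Definition cdim (d : nat) (Q : cube d) : nat := #|[pred i : 'I_d | (Q i).2]|.

Definition shift (d : nat) (x : 'I_d -> int) (Q : cube d) : cube d :=
  [ffun i => ((Q i).1 + x i, (Q i).2)].

(* the two faces of Q obtained by degenerating its (nondegenerate) i-th factor
   [l, l+1] into [l + e], e = 0 or 1 *)
Definition face (d : nat) (Q : cube d) (i : 'I_d) (e : int) : cube d :=
  [ffun j => if j == i then ((Q i).1 + e, false) else Q j].

Definition csign (d : nat) (Q : cube d) (i : 'I_d) : int :=
  (-1) ^+ #|[pred j : 'I_d | (j < i)%N && (Q j).2]|.

(* incidence number [Q : P] of the standard cubical boundary operator:
   d Q = sum_{i nondegenerate} csign Q i * (face Q i 1 - face Q i 0) *)
Definition inc (d : nat) (Q P : cube d) : int :=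
  \sum_(i : 'I_d | (Q i).2)
     csign Q i * ((P == face Q i 1)%:Z - (P == face Q i 0)%:Z).

(* the cubes Q having P as a facet, i.e. the only Q with inc Q P possibly
   nonzero: P with a degenerate factor [l] replaced by [l,l+1] or [l-1,l] *)
Definition coface_up (d : nat) (P : cube d) (i : 'I_d) : cube d :=
  [ffun j => if j == i then ((P i).1, true) else P j].
Definition coface_down (d : nat) (P : cube d) (i : 'I_d) : cube d :=
  [ffun j => if j == i then ((P i).1 - 1, true) else P j].
Definition cofaces (d : nat) (P : cube d) : seq (cube d) :=
  [seq coface_up P i | i <- enum 'I_d & ~~ (P i).2] ++
  [seq coface_down P i | i <- enum 'I_d & ~~ (P i).2].

Definition chain (d : nat) := cube d -> int.

(* c is an element of C_k(X): supported on k-dimensional elementary cubes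
   contained in X (for bounded X the support is automatically finite) *)
Definition is_chain (R : realType) (d : nat) (X : set ('I_d -> R)) (k : nat)
  (c : chain d) : Prop :=
  forall Q, c Q != 0 -> @cube_set R d Q `<=` X /\ cdim Q = k.

(* boundary operator: (bd c)(P) = sum_Q c(Q) [Q : P]; the sum is over the
   cofaces of P since [Q : P] = 0 for all other Q *)
Definition bd (d : nat) (c : chain d) : chain d :=
  fun P => \sum_(Q <- cofaces P) c Q * inc Q P.

Definition is_cycle (R : realType) (d : nat) (X : set ('I_d -> R)) (k : nat)
  (z : chain d) : Prop :=
  is_chain X k z /\ forall P, bd z P = 0.

Definition is_boundary (R : realType) (d : nat) (X : set ('I_d -> R)) (k : nat)
  (b : chain d) : Prop :=
  exists e : chain d, is_chain X k.+1 e /\ forall P, b P = bd e P.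

(* there are r k-cycles whose classes in H_k(X) are Z-linearly independent *)
Definition indep_homology (R : realType) (d : nat) (X : set ('I_d -> R))
  (k r : nat) : Prop :=
  exists z : 'I_r -> chain d,
    (forall i, is_cycle X k (z i)) /\
    forall a : 'I_r -> int,
      is_boundary X k (fun P => \sum_(i < r) a i * z i P) -> forall i, a i = 0.

(* beta_k(X) = rank of the free part of H_k(X) = maximal number of Z-linearly
   independent elements of H_k(X) (finite for bounded X); as a real number *)
Definition betti (R : realType) (d : nat) (X : set ('I_d -> R)) (k : nat) : R :=
  sup [set (r%:R : R) | r in [set r : nat | indep_homology X k r]].

Definition Omega0 (R : realType) (d : nat) := cube d -> {i01 R}.
HB.instance Definition _ (R : realType) (d : nat) := Choice.on (Omega0 R d).
HB.instance Definition _ (R : realType) (d : nat) :=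
  isPointed.Build (Omega0 R d) (fun _ => (0:R)%:i01).

(* product sigma-field: generated by the coordinate maps w |-> w_Q
   (= Borel sigma-field of the product topology, the product being countable) *)
Definition coord_sets (R : realType) (d : nat) : set (set (Omega0 R d)) :=
  [set A | exists (Q : cube d) (B : set R),
     measurable B /\ A = [set w : Omega0 R d | B (w Q)%:num]].

Definition Omega (R : realType) (d : nat) := g_sigma_algebraType (@coord_sets R d).

Definition tau (R : realType) (d : nat) (x : 'I_d -> int) (w : Omega R d)
  : Omega R d := fun Q => w (shift (fun i => - x i) Q).

Definition stationary (R : realType) (d : nat) (P : probability (Omega R d) R)
  : Prop :=
  forall (x : 'I_d -> int) (A : set (Omega R d)),
    measurable A -> P (tau x @^-1` A) = P A.

Definition ergodic (R : realType) (d : nat) (P : probability (Omega R d) R)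
  : Prop :=
  forall A : set (Omega R d), measurable A ->
    (forall x : 'I_d -> int, tau x @^-1` A = A) -> P A = 0%E \/ P A = 1%E.

Definition Xt (R : realType) (d : nat) (w : Omega R d) (t : R)
  : set ('I_d -> R) :=
  \bigcup_(Q in [set Q : cube d | (w Q)%:num <= t]) @cube_set R d Q.

Definition Lambda (R : realType) (d : nat) (n : nat) : set ('I_d -> R) :=
  [set x | forall i, - (n%:R) <= x i <= n%:R].

Definition vol (R : realType) (d n : nat) : R := ((2 * n) ^ d)%:R.

Definition betti_n (R : realType) (d : nat) (q n : nat) (t : R) (w : Omega R d)
  : R := betti (Xt w t `&` @Lambda R d n) q.

Definition Lqn (R : realType) (d : nat) (q n : nat) (w : Omega R d) : \bar R :=
  (\int[lebesgue_measure]_(t in `[0%R, 1%R]) (betti_n q n t w)%:E)%E.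

(* For each n, (w, t) |-> |Lambda_n|^-1 beta_q^n(t)(w) is jointly measurable,
   because inside Lambda_n it depends on (w, t) only through the finitely many
   events w_Q <= t, and it lies in [0, 4^d], because a cubical subset of
   Lambda_n has no more independent homology classes than there are
   elementary cubes in Lambda_n.  By Fubini, the set of (w, t), t in [0,1], at
   which it does not converge to betahat t has P-null t-sections, hence
   Lebesgue-null w-sections for P-almost every w; for such w dominated
   convergence in t gives the limit of the integrals.  Stationarity,
   ergodicity and the continuity assumption only serve to produce betahat,
   whose existence the statement already assumes. *)

From HB Require Import structures.
From mathcomp Require Import all_boot all_order all_algebra.
From mathcomp Require Import all_classical all_reals all_analysis.
From mathcomp Require Import zify measurable_realfun.
Import Order.TTheory GRing.Theory Num.Theory numFieldNormedType.Exports.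
Local Open Scope classical_set_scope.
Local Open Scope ring_scope.
Set Implicit Arguments. Unset Strict Implicit.

Lemma cvgr_natSinvP (R : realType) (u : R^nat) (l : R) :
  u @ \oo --> l <->
  forall k : nat, exists N : nat, forall m, `|u (N + m)%N - l| <= k.+1%:R^-1.
Proof.
split.
  move/cvgrPdist_le => u_l k.
  have [N _ uN] : \forall n \near \oo, `|l - u n| <= k.+1%:R^-1.
    by apply: u_l; rewrite invr_gt0 ltr0n.
  by exists N => m; rewrite distrC; apply: uN; rewrite /= leq_addr.
move=> u_l; apply/cvgrPdist_le => e e0.
have [k _ ke] := near_infty_natSinv_lt (PosNum e0).
have [N uN] := u_l k.
exists N => // n /= Nn; rewrite distrC -(subnKC Nn).
exact: le_trans (uN _) (ltW (ke k (leqnn k))).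
Qed.

Lemma measurable_cvg_set d (T : measurableType d) (R : realType)
    (h : (T -> R)^nat) (l : T -> R) :
  (forall n, measurable_fun setT (h n)) -> measurable_fun setT l ->
  measurable [set x | h n x @[n --> \oo] --> l x].
Proof.
move=> mh ml.
rewrite (_ : [set x | _] = \bigcap_k \bigcup_N \bigcap_m
    [set x | `|h (N + m)%N x - l x| <= k.+1%:R^-1]); last first.
  apply/seteqP; split => x /=.
    move/cvgr_natSinvP => hx k _.
    by have [N hN] := hx k; exists N => // m _; exact: hN.
  move=> hx; apply/cvgr_natSinvP => k.
  by have [N _ hN] := hx k I; exists N => m; exact: hN.
apply: bigcapT_measurable => k; apply: bigcupT_measurable => N.
apply: bigcapT_measurable => m.
have := measurableT_comp (@normr_measurable R setT)
  (measurable_funB (mh (N + m)%N) ml) measurableT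
  (measurable_itv `]-oo, k.+1%:R^-1]).
by rewrite setTI; congr measurable; apply/seteqP; split => x /=; rewrite in_itv.
Qed.

Section ae_cvg_sections.
Context d1 d2 (T1 : measurableType d1) (T2 : measurableType d2) (R : realType).
Variables (P : probability T1 R) (mu : {sigma_finite_measure set T2 -> \bar R}).
Variables (D : set T2) (mD : measurable D).
Variables (f : (T1 * T2 -> R)^nat) (g : T2 -> R).
Hypothesis mf : forall n, measurable_fun setT (f n).
Hypothesis f_cvg :
  forall t, D t -> {ae P, forall w, f n (w, t) @[n --> \oo] --> g t}.

(* Fubini applied to the indicator of the set of non-convergence points. *)
Lemma ae_cvg_sections : measurable_fun D g ->
  {ae P, forall w, {ae mu, forall t, D t -> f n (w, t) @[n --> \oo] --> g t}}.
Proof.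
move=> mg.
pose E := [set p : T1 * T2 | D p.2 /\ ~ f n p @[n --> \oo] --> g p.2].
have mE : measurable E.
  rewrite (_ : E = (setT `*` D) `&`
                  ~` [set p | f n p @[n --> \oo] --> (g \_ D) p.2]).
    apply: measurableI; first exact: measurableX.
    apply/measurableC/measurable_cvg_set => //.
    apply: measurableT_comp measurable_snd.
    exact/(measurable_restrictT _ mD).
  apply/seteqP; split => -[w t] /=; rewrite patchE;
    by [move=> [Dt ?]; rewrite mem_set | move=> [[_ Dt]]; rewrite mem_set].
have E_ysection0 t : P (ysection E t) = 0%E.
  have [Dt|NDt] := pselect (D t).
    have [N [mN PN0 subN]] := f_cvg Dt.
    apply: subset_measure0 (measurable_ysection t mE) mN _ PN0 => w.
    by rewrite /ysection /= inE => -[_ ?]; exact: subN.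
  suff -> : ysection E t = set0 by rewrite measure0.
  by apply/seteqP; split => // w; rewrite /ysection /= inE => -[].
have := indic_fubini_tonelli P mu mE.
rewrite indic_fubini_tonelli_FE // indic_fubini_tonelli_GE //.
rewrite [X in _ = X]integral0_eq /=; last by move=> t _; exact: E_ysection0.
move=> int_xsection0.
have : ae_eq P setT (mu \o xsection E) (cst 0%E).
  apply/(ae_eq_integral_abs P measurableT).
    exact: measurable_fun_xsection.
  by rewrite -int_xsection0; apply: eq_integral => w _; rewrite gee0_abs.
apply: filterS => w /(_ I) /= xsection0.
exists (xsection E w); split => //; first exact: measurable_xsection.
by move=> t /not_implyP[Dt ?]; rewrite /xsection /= inE.
Qed.

Section bounded.
Variable M : R.
Hypothesis f_ge0 : forall n p, 0 <= f n p.
Hypothesis f_le : forall n p, f n p <= M.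

(* By dominated convergence, g is on D the pointwise limit of the measurable
   functions t |-> \int[P]_w f n (w, t). *)
Lemma measurable_ae_limit : measurable_fun D (EFin \o g).
Proof.
apply: (@emeasurable_fun_cvg _ _ _ D
  (fun n t => (\int[P]_w (f n (w, t))%:E)%E)).
  move=> n; apply: (measurable_funS measurableT) => //.
  apply: (measurable_fun_fubini_tonelli_G (m1 := P) (EFin \o f n)).
    exact/measurable_EFinP.
  by move=> p; rewrite lee_fin.
move=> t Dt.
have [|||||_ _] := @dominated_convergence _ _ _ P setT measurableT
  (fun n w => (f n (w, t))%:E) (fun=> (g t)%:E) (fun=> M%:E).
- by move=> n; apply/measurable_EFinP; exact: measurable_fun_pair1.
- exact: measurable_cst.
- apply: filterS (f_cvg Dt) => w fw _.
  by apply: cvg_EFin; [exact: nearW | exact: fw].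
- exact: finite_measure_integrable_cst.
- by apply: aeW => w n _; rewrite lee_fin ger0_norm.
have P1 : (P : {measure set T1 -> \bar R}) setT = 1%E := probability_setT P.
by rewrite integral_cst // P1 mule1.
Qed.

Lemma ae_cvg_integral_sections : (mu D < +oo)%E ->
  {ae P, forall w, (\int[mu]_(t in D) (f n (w, t))%:E)%E @[n --> \oo] -->
                   (\int[mu]_(t in D) (g t)%:E)%E}.
Proof.
move=> muD_fin; have mg := measurable_ae_limit.
have /ae_cvg_sections : measurable_fun D g by exact/measurable_EFinP.
apply: filterS => w fw.
have [|||||_ _ //] := @dominated_convergence _ _ _ mu D mD
  (fun n t => (f n (w, t))%:E) (EFin \o g) (fun=> `|M|%:E).
- move=> n; apply: (measurable_funS measurableT) => //.
  by apply/measurable_EFinP; exact: measurable_fun_pair2.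
- exact: mg.
- apply: filterS fw => t fwt Dt.
  by apply: cvg_EFin; [exact: nearW | exact: fwt].
- apply/integrableP; split; first exact: measurable_cst.
  under eq_integral do rewrite /= normr_id.
  by rewrite integral_cst // lte_mul_pinfty.
- apply: aeW => t n _; rewrite lee_fin ger0_norm //.
  exact: le_trans (f_le n (w, t)) (ler_norm M).
Qed.
End bounded.

End ae_cvg_sections.

Lemma rat_common_denominator (I : finType) (v : I -> rat) :
  exists (c : int) (a : I -> int), c != 0 /\ forall i, (a i)%:~R = v i * c%:~R.
Proof.
exists (\prod_i denq (v i)).
exists (fun i => numq (v i) * \prod_(j | j != i) denq (v j)).
split=> [|i]; first by apply/prodf_neq0 => i _; exact: denq_neq0.
by rewrite [in RHS](bigD1 i) //= !intrM !rmorph_prod mulrA numqE.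
Qed.

Lemma int_vectors_dependent (T : finType) r (z : 'I_r -> T -> int) :
  (#|T| < r)%N -> exists a : 'I_r -> int,
    (exists i, a i != 0) /\ forall j, \sum_(i < r) a i * z i j = 0.
Proof.
move=> T_lt_r.
pose A : 'M[rat]_(r, #|T|) := \matrix_(i, k) (z i (enum_val k))%:~R.
have [v /sub_kermxP vA0 v_neq0] : exists2 v : 'rV_r, (v <= kermx A)%MS & v != 0.
  apply/rowV0Pn; rewrite kermx_eq0 /row_free neq_ltn.
  by rewrite (leq_ltn_trans (rank_leq_col A) T_lt_r).
have [c [a [c_neq0 aE]]] := rat_common_denominator (v 0).
exists a; split.
  have /rV0Pn[i vi_neq0] := v_neq0.
  by exists i; rewrite -(intr_eq0 rat) aE mulf_neq0 // intr_eq0.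
move=> j; apply/eqP; rewrite -(intr_eq0 rat) rmorph_sum /=.
move/matrixP: vA0 => /(_ 0 (enum_rank j)); rewrite !mxE => vAj.
rewrite (eq_bigr (fun i => v 0 i * A i (enum_rank j) * c%:~R)).
  by rewrite -mulr_suml vAj mul0r.
by move=> i _; rewrite intrM aE /A mxE enum_rankK mulrAC.
Qed.

(* A cube meeting Lambda_n has all its lower corners in [-n-1, n]; the
   coordinate l is stored as l + n + 1 < 2n + 2. *)
Definition box_cube (d n : nat) := {ffun 'I_d -> 'I_(n.*2.+2) * bool}.

Definition cube_of_box {d n : nat} (j : box_cube d n) : cube d :=
  [ffun i => (((j i).1 : nat)%:Z - n.+1%:Z, (j i).2)].

Lemma card_box_cube d n : #|box_cube d n| = ((n.*2.+2 * 2) ^ d)%N.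
Proof. by rewrite card_ffun card_prod card_ord card_bool card_ord. Qed.

Lemma cube_set_corner (R : realType) d (Q : cube d) :
  cube_set Q (fun i => ((Q i).1)%:~R : R).
Proof. by move=> i; rewrite lexx /= ler_int lerDl. Qed.

Lemma cube_of_box_onto (R : realType) d n (Q : cube d) (x : 'I_d -> R) :
  cube_set Q x -> Lambda n x -> exists j : box_cube d n, Q = cube_of_box j.
Proof.
move=> Qx Lx.
have Q_box i : (0 <= (Q i).1 + n.+1%:Z) /\ ((Q i).1 + n.+1%:Z < n.*2.+2%:Z).
  have /andP[Qx1 Qx2] := Qx i; have /andP[Lx1 Lx2] := Lx i.
  have : ((Q i).1%:~R <= (n%:Z)%:~R :> R) by exact: le_trans Qx1 Lx2.
  have : ((- (n%:Z))%:~R <= ((Q i).1 + ((Q i).2 : nat)%:Z)%:~R :> R).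
    by rewrite intrN; exact: le_trans Lx1 Qx2.
  rewrite !ler_int; have : (((Q i).2 : nat) <= 1)%N by case: (Q i).2.
  lia.
exists [ffun i => (inord (absz ((Q i).1 + n.+1%:Z)), (Q i).2)].
apply/ffunP => i; rewrite !ffunE /=; have [Q_lo Q_hi] := Q_box i.
rewrite inordK; last by lia.
by case: (Q i) Q_lo Q_hi => l b /= Q_lo Q_hi; congr pair; lia.
Qed.

Lemma indep_homology_le_card (R : realType) d n (X : set ('I_d -> R)) k r :
  X `<=` Lambda n -> indep_homology X k r -> (r <= #|box_cube d n|)%N.
Proof.
move=> X_box [z [z_cycle z_indep]]; rewrite leqNgt; apply/negP => card_lt_r.
have [a [[i ai_neq0] az0]] :=
  int_vectors_dependent (fun i j => z i (cube_of_box j)) card_lt_r.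
move/eqP: ai_neq0; apply; apply: (z_indep a) => //.
exists (fun _ => 0); split=> [Q|P]; first by rewrite eqxx.
rewrite /bd [RHS]big1 => [|Q _]; last by rewrite mul0r.
have [[j ->]|not_box] := pselect (exists j : box_cube d n, P = cube_of_box j).
  exact: az0.
apply: big1 => i' _; suff -> : z i' P = 0 by rewrite mulr0.
apply/eqP; apply: contrapT => /negP zP_neq0.
have [PX _] := (z_cycle i').1 P zP_neq0.
apply: not_box; apply: (cube_of_box_onto (cube_set_corner R P)).
exact/X_box/PX/cube_set_corner.
Qed.

Lemma betti_in_box (R : realType) d n (X : set ('I_d -> R)) k :
  X `<=` Lambda n -> 0 <= betti X k <= #|box_cube d n|%:R.
Proof.
move=> X_box; rewrite /betti; set S := [set _ | _ in _].
have S0 : S 0.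
  exists 0%N => //; exists (fun (i : 'I_0) _ => 0); split; first by case.
  by move=> a _ [].
have S_ub : ubound S #|box_cube d n|%:R.
  move=> _ [r r_indep <-]; rewrite ler_nat.
  exact: indep_homology_le_card r_indep.
apply/andP; split; last exact: ge_sup (ex_intro _ 0 S0) S_ub.
by apply: (sup_upper_bound _ S0); split; [exists 0 | exists #|box_cube d n|%:R].
Qed.

Lemma betti_n_ge0 (R : realType) d q n t (w : Omega R d) :
  0 <= betti_n q n t w.
Proof. by have /andP[] := betti_in_box q (@subIsetr _ (Xt w t) (Lambda n)). Qed.

Lemma betti_n_density_bounded (R : realType) d q n t (w : Omega R d) :
  0 <= (vol R d n)^-1 * betti_n q n t w <= (4 ^ d)%:R.
Proof.
have /andP[_ b_le] := betti_in_box q (@subIsetr _ (Xt w t) (Lambda n)).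
apply/andP; split; first by rewrite mulr_ge0 ?betti_n_ge0 // invr_ge0 ler0n.
case: n b_le => [|n] b_le.
  have vol0_inv_le1 : (vol R d 0)^-1 <= 1.
    rewrite /vol muln0; case: (d) => [|d']; first by rewrite expn0 invr1.
    by rewrite exp0n // invr0.
  rewrite -[X in _ <= X]mul1r ler_pM ?betti_n_ge0 // ?invr_ge0 ?ler0n //.
  by rewrite (le_trans b_le) // card_box_cube.
have vol_gt0 : 0 < vol R d n.+1 by rewrite ltr0n expn_gt0.
rewrite mulrC ler_pdivrMr // (le_trans b_le) // card_box_cube /vol.
rewrite -natrM ler_nat -expnMn; have [-> // | d_gt0] := posnP d.
by rewrite leq_exp2r //; lia.
Qed.

(* Inside Lambda_n, X(t) only depends on which cubes of the box are present. *)
Definition box_config (R : realType) d n (p : Omega R d * R)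
  : {ffun box_cube d n -> bool} :=
  [ffun j => (p.1 (cube_of_box j))%:num <= p.2].

Definition config_set (R : realType) d n (v : {ffun box_cube d n -> bool})
  : set ('I_d -> R) := \bigcup_(j in [set j | v j]) cube_set (cube_of_box j).

Lemma betti_n_config (R : realType) d q n t (w : Omega R d) :
  betti_n q n t w = betti (config_set (box_config n (w, t)) `&` Lambda n) q.
Proof.
congr betti; apply/seteqP; split => x [Xx Lx]; split => //.
  case: Xx => Q wQt Qx; have [j QE] := cube_of_box_onto Qx Lx.
  by exists j; rewrite -?QE //= ffunE /= -QE.
by case: Xx => j; rewrite /= ffunE => wjt jx; exists (cube_of_box j).
Qed.

Lemma measurable_coord (R : realType) d (Q : cube d) :
  measurable_fun setT (fun w : Omega R d => (w Q)%:num).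
Proof.
by move=> _ B mB; rewrite setTI; apply: sub_sigma_algebra; exists Q, B.
Qed.

Lemma measurable_cube_present (R : realType) d (Q : cube d) :
  measurable [set p : Omega R d * R | (p.1 Q)%:num <= p.2].
Proof.
have : measurable_fun setT (fun p : Omega R d * R => (p.1 Q)%:num - p.2).
  apply: measurable_funB; last exact: measurable_snd.
  exact: measurableT_comp (measurable_coord Q) measurable_fst.
move=> /(_ measurableT `]-oo, 0]%classic (measurable_itv _)).
by rewrite setTI; congr measurable; apply/seteqP; split => p /=;
  rewrite in_itv /= subr_le0.
Qed.

Lemma measurable_box_config_fiber (R : realType) d n
    (v : {ffun box_cube d n -> bool}) :
  measurable [set p : Omega R d * R | box_config n p = v].
Proof.
pose A (j : box_cube d n) :=
  [set p : Omega R d * R | (p.1 (cube_of_box j))%:num <= p.2].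
rewrite (_ : [set p | _] = \bigcap_(j in setT) (if v j then A j else ~` A j)).
  apply: fin_bigcap_measurable; first exact: finite_finset.
  move=> j _; case: (v j); first exact: measurable_cube_present.
  by apply: measurableC; exact: measurable_cube_present.
apply/seteqP; split => p /=.
  by move=> <- j _; rewrite ffunE; case: ifPn => // /negP.
move=> pv; apply/ffunP => j; rewrite ffunE; have := pv j I.
by case: (v j) => /=; [move=> -> | move/negP/negbTE].
Qed.

Lemma measurable_betti_n (R : realType) d q n :
  measurable_fun setT (fun p : Omega R d * R => betti_n q n p.2 p.1).
Proof.
move=> _ B mB; rewrite setTI.
rewrite (_ : _ @^-1` B =
    \bigcup_(v in [set v | B (betti (config_set v `&` Lambda n) q)])
      [set p | box_config n p = v]).
  apply: fin_bigcup_measurable; first exact: finite_finset.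
  by move=> v _; exact: measurable_box_config_fiber.
apply/seteqP; split => -[w t] /=.
  by move=> Bwt; exists (box_config n (w, t)) => //=; rewrite -betti_n_config.
by case=> v Bv /= wtv; rewrite betti_n_config wtv.
Qed.

Lemma Lqn_density (R : realType) d q n (w : Omega R d) :
  (((vol R d n)^-1)%:E * Lqn q n w =
   \int[lebesgue_measure]_(t in `[0%R, 1%R])
     ((vol R d n)^-1 * betti_n q n t w)%:E)%E.
Proof.
rewrite /Lqn -ge0_integralZl //.
- apply: (measurable_funS measurableT) => //; apply/measurable_EFinP.
  exact: measurable_fun_pair2 (measurable_betti_n q n).
- by move=> t _; rewrite lee_fin betti_n_ge0.
- by rewrite lee_fin invr_ge0 ler0n.
Qed.

Theorem corollary2p10 (R : realType) (d : nat) (P : probability (Omega R d) R)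
  (q : nat) (betahat : R -> R) :
  stationary P -> ergodic P -> (q < d)%N ->
  (* betahat t is the a.s. limit of |Lambda_n|^-1 beta_q^n(t), t in [0,1] *)
  (forall t : R, t \in `[0, 1] ->
     {ae P, forall w : Omega R d, ((vol R d n)^-1 * betti_n q n t w)
                        @[n --> \oo] --> betahat t}) ->
  (* t |-> P(w_Q <= t) is continuous on [0,1] for every elementary cube Q *)
  (forall Q : cube d,
     {within `[0, 1], continuous
        (fun t : R => fine (P [set w : Omega R d | (w Q)%:num <= t]))}) ->
  {ae P, forall w : Omega R d, (fun n : nat => ((vol R d n)^-1)%:E * Lqn q n w)%E
     @ \oo --> (\int[lebesgue_measure]_(t in `[0%R, 1%R]) (betahat t)%:E)%E}.
Proof.
move=> _ _ _ betti_cvg _.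
pose f n (p : Omega R d * R) := (vol R d n)^-1 * betti_n q n p.2 p.1.
have mf n : measurable_fun setT (f n).
  apply: measurable_funM; first exact: measurable_cst.
  exact: measurable_betti_n.
have f_ge0 n p : 0 <= f n p.
  by have /andP[] := betti_n_density_bounded q n p.2 p.1.
have f_le n p : f n p <= (4 ^ d)%:R.
  by have /andP[] := betti_n_density_bounded q n p.2 p.1.
have f_cvg t : `[0, 1]%classic t ->
    {ae P, forall w, f n (w, t) @[n --> \oo] --> betahat t}.
  by move=> t01; apply: betti_cvg; rewrite inE.
have leb01_fin : (lebesgue_measure (`[0%R, 1%R]%classic : set R) < +oo)%E.
  by rewrite lebesgue_measure_itv /= lte_fin ltr01 sube0 ltry.
have := ae_cvg_integral_sections (mu := lebesgue_measure) (measurable_itv _)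
  mf f_cvg f_ge0 f_le leb01_fin.
by apply: filterS => w; rewrite (eq_cvg _ _ (fun n => Lqn_density q n w)).
Qed.
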